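(* Let $N\ge2$, $\mathcal{D}=\{d_1,\dots,d_N\}\subset\mathbb{Z}$ with $\#\mathcal{D}=N$, and $\tau_{d_i}(x)=\frac1N(x+d_i)$ on $\mathbb{R}$. If the attractor $X$ of $\{\tau_{d_i}\}$ is a self-similar tile (equivalently, has positive Lebesgue measure), then there exists $\mathcal{E}\subset\mathbb{Z}$ such that $\mathcal{D}\oplus\mathcal{E}=\mathbb{Z}$.
   Context: The attractor $X$ is the unique nonempty compact set with $X=\bigcup_i\tau_{d_i}(X)$; it is a self-similar tile if it has positive Lebesgue measure (then it tiles $\mathbb{R}$ by translations). $\mathcal{D}\oplus\mathcal{E}=\mathbb{Z}$ means every integer is uniquely $d+e$ with $d\in\mathcal{D}$, $e\in\mathcal{E}$. *)

From Stdlib Require Import Reals Lra Lia ZArith List Rtopology.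
Open Scope R_scope.

Definition tau (N : nat) (d : Z) (x : R) : R := (x + IZR d) / INR N.

Definition ifs_invariant (N : nat) (D : list Z) (X : R -> Prop) : Prop :=
  forall x, X x <-> exists d, In d D /\ exists y, X y /\ x = tau N d y.

Definition is_attractor (N : nat) (D : list Z) (X : R -> Prop) : Prop :=
  (exists x, X x) /\ compact X /\ ifs_invariant N D X.

Definition lebesgue_null (X : R -> Prop) : Prop :=
  forall eps, 0 < eps ->
    exists a b : nat -> R,
      (forall n, a n <= b n) /\
      (forall x, X x -> exists n, a n < x < b n) /\
      (forall n, sum_f_R0 (fun k => b k - a k) n <= eps).

Definition positive_measure (X : R -> Prop) : Prop := ~ lebesgue_null X.

Definition direct_sum_Z (D : list Z) (E : Z -> Prop) : Prop :=
  forall z : Z, exists d e, In d D /\ E e /\ z = (d + e)%Z /\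
    forall d' e', In d' D -> E e' -> z = (d' + e')%Z -> d' = d /\ e' = e.

(* For a level a, an integer p is an a-cell when [p, p + 1] / N^a meets X; let c(a)
   be the number of a-cells.  Iterating X = U_d tau_d(X) shows that the (a+k)-cells
   are exactly the numbers g + N^a (d_0 + N d_1 + ... + N^(k-1) d_(k-1)) with g an
   a-cell and d_i in D: they carry c(a) N^k "addresses".  Fix M and m = 2M + 1.
   - If 2 c(2a+m) + N^a c(a) <= 2 N^(a+m) c(a) at every level a, the density
     c(a) / N^a contracts geometrically along a -> 2a + m; covering X by intervals
     around the cells then shows that X is null.
   - Otherwise, for some a, few addresses are wasted on collisions or on missing
     cells, and a pigeonhole count finds N^m points in arithmetic progression of step
     N^a that are all uniquely addressed cells; the first digits of their addresses
     tile the window [-M, M] by D.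
   Since X is not null, every window is tiled, and a König-type compactness argument
   assembles these window tilings into a tiling of Z. *)
From Stdlib Require Import Reals ZArith List Rtopology Lia Lra ClassicalEpsilon Classical.
Import ListNotations.

Section Compactness.
Variable D : list Z.

Definition window_tiling (M : Z) (E : Z -> Prop) : Prop :=
  forall z, (- M <= z <= M)%Z ->
    (exists d e, In d D /\ E e /\ z = (d + e)%Z) /\
    (forall d e d' e', In d D -> E e -> z = (d + e)%Z ->
                       In d' D -> E e' -> z = (d' + e')%Z -> d = d').

Lemma window_tiling_shrink M M' E : (M' <= M)%Z -> window_tiling M E -> window_tiling M' E.
Proof. intros HM HE z Hz. apply HE. lia. Qed.

Definition extendable (S P : Z -> Prop) : Prop :=
  forall M, exists E, window_tiling M E /\ forall z, S z -> (E z <-> P z).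

Lemma extendable_shrink S1 S2 P :
  (forall z, S1 z -> S2 z) -> extendable S2 P -> extendable S1 P.
Proof. intros HS HP M. destruct (HP M) as [E [HE HEP]]. eauto. Qed.

Definition update (P : Z -> Prop) (y : Z) (Q : Prop) : Z -> Prop :=
  fun z => if Z.eq_dec z y then Q else P z.

(* Either
   "y in E" is compatible with window tilings of all sizes, or it fails at some size
   M1, and then the tilings of sizes >= M1 that agree with P all avoid y. *)
Lemma extendable_add_point S P y :
  extendable S P -> exists Q, extendable (fun z => S z \/ z = y) (update P y Q).
Proof.
  intros HP.
  assert (Hupd : forall Q E, (forall z, S z -> (E z <-> P z)) -> (E y <-> Q) ->
            forall z, S z \/ z = y -> (E z <-> update P y Q z)).
  { intros Q E HEP HEy z Hz. unfold update.
    destruct (Z.eq_dec z y) as [->|Hne]; [exact HEy|]. destruct Hz as [Hz|Hz]; [auto|congruence]. }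
  destruct (classic (forall M, exists E, window_tiling M E /\
                       (forall z, S z -> (E z <-> P z)) /\ E y)) as [Hin|Hout].
  - exists True. intros M. destruct (Hin M) as [E [HE [HEP HEy]]].
    exists E. split; [exact HE|]. apply Hupd; tauto.
  - exists False. apply not_all_ex_not in Hout as [M1 HM1]. intros M.
    destruct (HP (Z.max M M1)) as [E [HE HEP]]. exists E.
    split; [apply (window_tiling_shrink (Z.max M M1)); [lia|exact HE]|].
    apply Hupd; [exact HEP|]. split; [|tauto]. intros HEy. apply HM1. exists E.
    split; [apply (window_tiling_shrink (Z.max M M1)); [lia|exact HE]|]. tauto.
Qed.

Definition ball (n : nat) (z : Z) : Prop := (Z.abs z < Z.of_nat n)%Z.

Lemma extendable_grow n P : extendable (ball n) P ->
  { P' | extendable (ball (S n)) P' /\ forall z, ball n z -> (P' z <-> P z) }.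
Proof.
  intros HP. apply constructive_indefinite_description.
  destruct (extendable_add_point _ _ (Z.of_nat n) HP) as [Q1 H1].
  destruct (extendable_add_point _ _ (- Z.of_nat n)%Z H1) as [Q2 H2].
  exists (update (update P (Z.of_nat n) Q1) (- Z.of_nat n)%Z Q2). split.
  - eapply extendable_shrink; [|exact H2]. unfold ball. intros z Hz. lia.
  - intros z Hz. unfold ball, update in *.
    destruct (Z.eq_dec z (- Z.of_nat n)); [lia|]. destruct (Z.eq_dec z (Z.of_nat n)); [lia|]. tauto.
Qed.

Hypothesis windows : forall M, exists E, window_tiling M E.

Lemma extendable_empty : extendable (ball 0) (fun _ => False).
Proof.
  intros M. destruct (windows M) as [E HE]. exists E. split; [exact HE|].
  unfold ball. intros z Hz. lia.
Qed.

Fixpoint chain (n : nat) : { P | extendable (ball n) P } :=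
  match n with
  | O => exist _ _ extendable_empty
  | S n => let grown := extendable_grow n _ (proj2_sig (chain n)) in
           exist _ (proj1_sig grown) (proj1 (proj2_sig grown))
  end.

Lemma chain_step n z : ball n z -> (proj1_sig (chain (S n)) z <-> proj1_sig (chain n) z).
Proof.
  exact (proj2 (proj2_sig (extendable_grow n _ (proj2_sig (chain n)))) z).
Qed.

Lemma chain_coherent n m z : (n <= m)%nat -> ball n z ->
  (proj1_sig (chain m) z <-> proj1_sig (chain n) z).
Proof.
  induction 1 as [|m Hnm IH]; intros Hz; [tauto|].
  rewrite chain_step by (unfold ball in *; lia). auto.
Qed.

Definition limit_tile (z : Z) : Prop := proj1_sig (chain (S (Z.to_nat (Z.abs z)))) z.

Lemma limit_tile_agrees n z : ball n z -> (limit_tile z <-> proj1_sig (chain n) z).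
Proof.
  intros Hz. unfold limit_tile.
  assert (Hz' : ball (S (Z.to_nat (Z.abs z))) z) by (unfold ball; lia).
  destruct (Nat.le_ge_cases n (S (Z.to_nat (Z.abs z)))) as [H|H].
  - now apply chain_coherent.
  - symmetry. now apply chain_coherent.
Qed.

Lemma digits_bounded : exists B, forall d, In d D -> (Z.abs d <= B)%Z.
Proof.
  induction D as [|a l [B HB]].
  - exists 0%Z. intros d [].
  - exists (Z.max (Z.abs a) B). intros d [->|Hd]; [lia|]. specialize (HB d Hd). lia.
Qed.

(* Compactness: tilings of all windows yield a tiling of Z.  To decompose z, use a
   window tiling agreeing with the chain on a ball containing all candidates z - d. *)
Lemma tiling_from_windows : exists E, direct_sum_Z D E.
Proof.
  exists limit_tile. intros z. destruct digits_bounded as [B HB].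
  set (K := S (Z.to_nat (Z.abs z + B))).
  assert (Hball : forall d e, In d D -> z = (d + e)%Z -> ball K e).
  { intros d e Hd ->. specialize (HB d Hd). unfold ball, K. lia. }
  destruct (proj2_sig (chain K) (Z.abs z)) as [E [HE HEP]].
  assert (HEl : forall d e, In d D -> z = (d + e)%Z -> (E e <-> limit_tile e)).
  { intros d e Hd Hz. rewrite (limit_tile_agrees K) by eauto. apply HEP. eauto. }
  destruct (HE z ltac:(lia)) as [[d [e [Hd [He Hz]]]] Huniq].
  exists d, e. split; [exact Hd|]. split; [now apply (HEl d)|]. split; [exact Hz|].
  intros d' e' Hd' He' Hz'.
  assert (d' = d) as -> by (apply (Huniq d' e' d e); auto; now apply (HEl d')).
  split; [reflexivity|lia].
Qed.

End Compactness.
Definition zrange (lo : Z) (n : nat) : list Z := map (fun i => (lo + Z.of_nat i)%Z) (seq 0 n).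

Lemma in_zrange lo n p : In p (zrange lo n) <-> (lo <= p < lo + Z.of_nat n)%Z.
Proof.
  unfold zrange. rewrite in_map_iff. split.
  - intros [i [<- Hi]]. apply in_seq in Hi. lia.
  - intros H. exists (Z.to_nat (p - lo)). split; [lia|]. apply in_seq. lia.
Qed.

Lemma zrange_NoDup lo n : NoDup (zrange lo n).
Proof.
  apply NoDup_map_NoDup_ForallPairs; [|apply seq_NoDup]. intros x y _ _ H. lia.
Qed.

Lemma zrange_length lo n : length (zrange lo n) = n.
Proof. unfold zrange. now rewrite length_map, length_seq. Qed.

Lemma NoDup_prod {A B} (l1 : list A) (l2 : list B) :
  NoDup l1 -> NoDup l2 -> NoDup (list_prod l1 l2).
Proof.
  induction 1 as [|x l Hx Hl IH]; intros H2; simpl; [constructor|].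
  apply NoDup_app.
  - apply NoDup_map_NoDup_ForallPairs; [intros a b _ _ E; now inversion E | exact H2].
  - now apply IH.
  - intros [a b] Ha Hb. apply in_map_iff in Ha as [y [Ey _]]. inversion Ey; subst.
    apply in_prod_iff in Hb as [Hb _]. contradiction.
Qed.

Definition decb (P : Prop) : bool := if excluded_middle_informative P then true else false.

Lemma in_filter_decb {A} (P : A -> Prop) l x :
  In x (filter (fun y => decb (P y)) l) <-> In x l /\ P x.
Proof.
  rewrite filter_In. unfold decb. destruct (excluded_middle_informative (P x)); intuition discriminate.
Qed.

(* Choose one
   preimage for each point of S and a second one for each point of C. *)
Lemma fibre_count {A B} (x0 : A) (f : A -> B) (l : list A) (S C : list B) :
  NoDup S -> NoDup C -> incl C S ->
  (forall y, In y S -> exists x, In x l /\ f x = y) ->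
  (forall y, In y C -> exists x x', In x l /\ In x' l /\ f x = y /\ f x' = y /\ x <> x') ->
  (length S + length C <= length l)%nat.
Proof.
  intros HS HC HCS Hsurj Htwo.
  set (pick := fun y => epsilon (inhabits x0) (fun x => In x l /\ f x = y)).
  set (pick2 := fun y => epsilon (inhabits x0) (fun x => In x l /\ f x = y /\ x <> pick y)).
  assert (Hp1 : forall y, In y S -> In (pick y) l /\ f (pick y) = y).
  { intros y Hy. apply (epsilon_spec (inhabits x0) (fun x => In x l /\ f x = y)). auto. }
  assert (Hp2 : forall y, In y C -> In (pick2 y) l /\ f (pick2 y) = y /\ pick2 y <> pick y).
  { intros y Hy. apply (epsilon_spec (inhabits x0) (fun x => In x l /\ f x = y /\ x <> pick y)).
    destruct (Htwo y Hy) as [x [x' [Hx [Hx' [Hfx [Hfx' Hxx']]]]]].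
    destruct (classic (x = pick y)) as [->|Hne]; [exists x'|exists x]; auto. }
  rewrite <- (length_map pick S), <- (length_map pick2 C), <- length_app.
  apply NoDup_incl_length.
  - apply NoDup_app.
    + apply NoDup_map_NoDup_ForallPairs; [|exact HS].
      intros y y' Hy Hy' E. rewrite <- (proj2 (Hp1 y Hy)), <- (proj2 (Hp1 y' Hy')). now rewrite E.
    + apply NoDup_map_NoDup_ForallPairs; [|exact HC].
      intros y y' Hy Hy' E. rewrite <- (proj1 (proj2 (Hp2 y Hy))), <- (proj1 (proj2 (Hp2 y' Hy'))).
      now rewrite E.
    + intros x H1 H2. apply in_map_iff in H1 as [y [<- Hy]]. apply in_map_iff in H2 as [y' [E Hy']].
      destruct (Hp2 y' Hy') as [_ [Ey' Hne]]. destruct (Hp1 y Hy) as [_ Ey].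
      assert (y = y') as <- by (rewrite <- Ey, <- Ey', E; reflexivity). auto.
  - intros x Hx. apply in_app_or in Hx as [Hx|Hx]; apply in_map_iff in Hx as [y [<- Hy]].
    + now apply Hp1.
    + now apply Hp2.
Qed.

(* Throughout, D is a list of N >= 2 digits, X is invariant under the maps tau_d,
   and X lies between the integers lo and hi (compactness of the attractor enters
   only through these bounds). *)
Section SelfSimilar.
Variable N : nat.
Variable D : list Z.
Variable X : R -> Prop.
Hypothesis N_ge_2 : (2 <= N)%nat.
Hypothesis D_length : length D = N.
Hypothesis X_invariant : ifs_invariant N D X.
Variables lo hi : Z.
Hypothesis X_between : forall x, X x -> (IZR lo <= x <= IZR hi)%R.

Definition Npow (a : nat) : Z := Z.of_nat (N ^ a).

Lemma Npow_IZR a : IZR (Npow a) = (INR N ^ a)%R.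
Proof. unfold Npow. now rewrite <- INR_IZR_INZ, pow_INR. Qed.

Lemma Npow_pos a : (0 < Npow a)%Z.
Proof. unfold Npow. assert (0 < N ^ a)%nat by (apply Nat.neq_0_lt_0, Nat.pow_nonzero; lia). lia. Qed.

Lemma Npow_add a b : Npow (a + b) = (Npow a * Npow b)%Z.
Proof. unfold Npow. now rewrite Nat.pow_add_r, Nat2Z.inj_mul. Qed.

Lemma powN_pos a : (0 < INR N ^ a)%R.
Proof. apply pow_lt, lt_0_INR. lia. Qed.

Fixpoint words (k : nat) : list (list Z) :=
  match k with
  | O => [[]]
  | S k => map (fun p => fst p :: snd p) (list_prod D (words k))
  end.

Fixpoint word_value (t : list Z) : Z :=
  match t with [] => 0%Z | d :: t => (d + Z.of_nat N * word_value t)%Z end.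

Lemma in_words_S k t :
  In t (words (S k)) <-> exists d t', t = d :: t' /\ In d D /\ In t' (words k).
Proof.
  simpl. rewrite in_map_iff. split.
  - intros [[d t'] [<- Hin]]. apply in_prod_iff in Hin. exists d, t'. simpl. tauto.
  - intros [d [t' [-> [Hd Ht']]]]. exists (d, t'). split; [reflexivity|]. now apply in_prod_iff.
Qed.

Lemma words_length k : length (words k) = (N ^ k)%nat.
Proof. induction k; simpl; auto. now rewrite length_map, length_prod, IHk, D_length. Qed.

Lemma X_expand k x : X x ->
  exists t y, In t (words k) /\ X y /\ (INR N ^ k * x = y + IZR (word_value t))%R.
Proof.
  induction k as [|k IH].
  - intros Hx. exists [], x. simpl. repeat split; auto. lra.
  - intros Hx. destruct (IH Hx) as [t [y [Ht [Hy Heq]]]].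
    destruct (proj1 (X_invariant y) Hy) as [d [Hd [y' [Hy' ->]]]].
    exists (d :: t), y'. split; [apply in_words_S; eauto|]. split; [exact Hy'|].
    simpl. rewrite plus_IZR, mult_IZR, <- INR_IZR_INZ, Rmult_assoc, Heq. unfold tau.
    field. apply not_0_INR. lia.
Qed.

Lemma X_contract k y t : X y -> In t (words k) ->
  X ((y + IZR (word_value t)) / INR N ^ k)%R.
Proof.
  revert y t. induction k as [|k IH]; intros y t Hy Ht.
  - destruct Ht as [<-|[]]. simpl. now replace ((y + 0) / 1)%R with y by field.
  - apply in_words_S in Ht as [d [t' [-> [Hd Ht']]]].
    assert (Hy' : X (tau N d y)) by (apply X_invariant; eauto).
    replace ((y + IZR (word_value (d :: t'))) / INR N ^ S k)%R
      with ((tau N d y + IZR (word_value t')) / INR N ^ k)%R; [now apply IH|].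
    simpl. rewrite plus_IZR, mult_IZR, <- INR_IZR_INZ. unfold tau.
    field. split; apply Rgt_not_eq; [apply powN_pos|apply lt_0_INR; lia].
Qed.

Definition cell (a : nat) (p : Z) : Prop :=
  exists x, X x /\ (IZR p <= INR N ^ a * x <= IZR p + 1)%R.

Lemma cell_refine a k p :
  cell (a + k) p <-> exists g t, cell a g /\ In t (words k) /\ p = (g + Npow a * word_value t)%Z.
Proof.
  split.
  - intros [x [Hx Hp]]. destruct (X_expand k x Hx) as [t [y [Ht [Hy Heq]]]].
    exists (p - Npow a * word_value t)%Z, t. split; [|split; [exact Ht|ring]].
    exists y. split; [exact Hy|]. rewrite minus_IZR, mult_IZR, Npow_IZR.
    rewrite pow_add, Rmult_assoc, Heq in Hp. lra.
  - intros [g [t [[y [Hy Hg]] [Ht ->]]]].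
    exists ((y + IZR (word_value t)) / INR N ^ k)%R. split; [now apply X_contract|].
    rewrite plus_IZR, mult_IZR, Npow_IZR, pow_add.
    replace (INR N ^ a * INR N ^ k * ((y + IZR (word_value t)) / INR N ^ k))%R
      with (INR N ^ a * y + INR N ^ a * IZR (word_value t))%R; [lra|].
    field. apply Rgt_not_eq, powN_pos.
Qed.

Lemma cell_coarsen a k p : cell (a + k) p -> cell a (p / Npow k).
Proof.
  intros [x [Hx Hp]]. exists x. split; [exact Hx|].
  assert (Hq := Npow_pos k).
  assert (Hdm := Z.div_mod p (Npow k) ltac:(lia)).
  assert (Hb := Z.mod_pos_bound p (Npow k) Hq).
  set (n := (p / Npow k)%Z) in *.
  rewrite pow_add, <- (Npow_IZR k) in Hp.
  assert (Hqr : (0 < IZR (Npow k))%R) by (apply IZR_lt; lia).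
  assert (E1 : (IZR (Npow k) * IZR n <= IZR p)%R) by (rewrite <- mult_IZR; apply IZR_le; lia).
  assert (E2 : (IZR p + 1 <= IZR (Npow k) * (IZR n + 1))%R).
  { rewrite <- (plus_IZR n 1), <- mult_IZR, <- (plus_IZR p 1). apply IZR_le. lia. }
  split; apply (Rmult_le_reg_l (IZR (Npow k))); nra.
Qed.

Lemma cell_range a p : cell a p -> (Npow a * lo - 1 <= p <= Npow a * hi)%Z.
Proof.
  intros [x [Hx Hp]]. destruct (X_between x Hx) as [H1 H2].
  assert (Hq := powN_pos a).
  assert (INR N ^ a * IZR lo <= INR N ^ a * x)%R by (apply Rmult_le_compat_l; lra).
  assert (INR N ^ a * x <= INR N ^ a * IZR hi)%R by (apply Rmult_le_compat_l; lra).
  rewrite <- Npow_IZR, <- mult_IZR in *. split.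
  - assert (Npow a * lo <= p + 1)%Z by (apply le_IZR; rewrite plus_IZR; lra). lia.
  - apply le_IZR. lra.
Qed.

Definition cells (a : nat) : list Z :=
  filter (fun p => decb (cell a p))
    (zrange (Npow a * lo - 1) (Z.to_nat (Npow a * (hi - lo) + 2))).

Lemma in_cells a p : In p (cells a) <-> cell a p.
Proof.
  unfold cells. rewrite in_filter_decb, in_zrange. split; [tauto|].
  intros H. split; [|exact H]. pose proof (cell_range a p H). lia.
Qed.

Lemma cells_NoDup a : NoDup (cells a).
Proof. apply NoDup_filter, zrange_NoDup. Qed.

Definition cell_count (a : nat) : nat := length (cells a).

Lemma sum_truncated_const (f : nat -> R) (L : nat) (c : R) : (0 <= c)%R ->
  (forall k, f k = if lt_dec k L then c else 0%R) ->
  forall n, (sum_f_R0 f n <= INR L * c)%R.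
Proof.
  intros Hc Hf.
  assert (H : forall n, (sum_f_R0 f n <= INR (Nat.min (S n) L) * c)%R).
  { induction n; simpl sum_f_R0; rewrite Hf.
    - destruct (lt_dec 0 L); destruct L; simpl; try lia; lra.
    - destruct (lt_dec (S n) L).
      + replace (Nat.min (S (S n)) L) with (S (Nat.min (S n) L)) by lia. rewrite S_INR. lra.
      + replace (Nat.min (S (S n)) L) with (Nat.min (S n) L) by lia. lra. }
  intros n. eapply Rle_trans; [apply H|]. apply Rmult_le_compat_r; [exact Hc|]. apply le_INR. lia.
Qed.

Lemma cover_by_cells a : exists lft rgt : nat -> R,
  (forall n, lft n <= rgt n)%R /\ (forall x, X x -> exists n, lft n < x < rgt n)%R /\
  (forall n, sum_f_R0 (fun k => rgt k - lft k) n <= 2 * INR (cell_count a) / INR N ^ a)%R.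
Proof.
  set (l := cells a). set (L := length l). set (Na := (INR N ^ a)%R).
  assert (HNa : (0 < Na)%R) by apply powN_pos.
  exists (fun n => if lt_dec n L then ((IZR (nth n l 0%Z) - 1) / Na)%R else 0%R).
  exists (fun n => if lt_dec n L then ((IZR (nth n l 0%Z) + 1) / Na)%R else 0%R).
  split; [|split].
  - intro n. destruct (lt_dec n L); [|lra].
    apply Rmult_le_compat_r; [left; now apply Rinv_0_lt_compat|lra].
  - intros x Hx. set (r := (Na * x)%R). destruct (archimed r) as [H1 H2].
    set (p := (up r - 1)%Z).
    assert (Hp : In p l).
    { apply in_cells. exists x. split; [exact Hx|]. unfold p. rewrite minus_IZR. fold Na r. lra. }
    destruct (In_nth l p 0%Z Hp) as [n [Hn Hnth]].
    exists n. destruct (lt_dec n L); [|unfold L in *; lia]. rewrite Hnth.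
    replace x with (r / Na)%R by (unfold r; field; lra).
    unfold p. rewrite minus_IZR.
    split; apply Rmult_lt_compat_r; try (apply Rinv_0_lt_compat; lra); lra.
  - intros n. eapply Rle_trans.
    + apply (sum_truncated_const _ L (2 / Na)%R).
      * unfold Rdiv. apply Rmult_le_pos; [lra|]. left. now apply Rinv_0_lt_compat.
      * intros k. destruct (lt_dec k L); [field; lra|lra].
    + unfold L, l. fold (cell_count a). right. field. lra.
Qed.

(* A nonnegative sequence contracting by lam < 1 along a -> 2a + m becomes arbitrarily
   small: iterate along the indices 0, m, 3m, 7m, ... *)
Lemma contraction_small (r : nat -> R) (m : nat) (lam : R) :
  (0 <= lam < 1)%R -> (forall a, 0 <= r a)%R -> (forall a, r (a + (a + m))%nat <= lam * r a)%R ->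
  forall eps, (0 < eps)%R -> exists a, (r a <= eps)%R.
Proof.
  intros Hlam Hr Hstep eps Heps.
  set (idx := fix idx i := match i with O => O | S i => (idx i + (idx i + m))%nat end).
  assert (Hidx : forall i, (r (idx i) <= lam ^ i * r 0%nat)%R).
  { induction i; simpl; [lra|]. eapply Rle_trans; [apply Hstep|].
    rewrite Rmult_assoc. apply Rmult_le_compat_l; [lra|exact IHi]. }
  assert (Hr0 := Hr 0%nat).
  destruct (pow_lt_1_zero lam ltac:(rewrite Rabs_right; lra) (eps / (r 0%nat + 1))%R)
    as [i Hi]; [apply Rdiv_lt_0_compat; lra|].
  specialize (Hi i (le_n _)). rewrite Rabs_right in Hi by (apply Rle_ge, pow_le; lra).
  exists (idx i). eapply Rle_trans; [apply Hidx|].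
  apply Rle_trans with (eps / (r 0%nat + 1) * (r 0%nat + 1))%R; [|right; field; lra].
  apply Rmult_le_compat; try lra. apply pow_le. lra.
Qed.

Definition cell_density (a : nat) : R := (INR (cell_count a) / INR N ^ a)%R.

(* The counting inequality 2 c(2a+m) + N^a c(a) <= 2 N^(a+m) c(a) says that the
   density drops by the factor 1 - 1 / (2 N^m) from level a to level 2a + m. *)
Definition density_drops (m a : nat) : Prop :=
  (2 * cell_count (a + (a + m)) + N ^ a * cell_count a <= 2 * N ^ (a + m) * cell_count a)%nat.

Lemma density_drop_factor m a : density_drops m a ->
  (cell_density (a + (a + m)) <= (1 - 1 / (2 * INR N ^ m)) * cell_density a)%R.
Proof.
  unfold density_drops, cell_density. intros Hd. apply le_INR in Hd.
  rewrite !plus_INR, !mult_INR, !pow_INR, !pow_add in Hd. rewrite !pow_add.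
  assert (Hu := powN_pos a). assert (Hv := powN_pos m).
  set (u := (INR N ^ a)%R) in *. set (v := (INR N ^ m)%R) in *.
  set (c := INR (cell_count a)) in *. set (c' := INR (cell_count (a + (a + m)))) in *.
  simpl in Hd. fold v in Hd.
  apply Rle_trans with (2 * c' * / (2 * (u * (u * v))))%R; [right; field; lra|].
  apply Rle_trans with ((2 * (u * v) * c - u * c) * / (2 * (u * (u * v))))%R;
    [|right; field; lra].
  apply Rmult_le_compat_r; [|lra].
  left. apply Rinv_0_lt_compat. repeat apply Rmult_lt_0_compat; lra.
Qed.

Lemma null_if_density_drops m : (forall a, density_drops m a) -> lebesgue_null X.
Proof.
  intros Hd eps Heps.
  assert (Hv : (1 <= INR N ^ m)%R) by (apply pow_R1_Rle, (le_INR 1); lia).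
  assert (Hlam : (0 <= 1 - 1 / (2 * INR N ^ m) < 1)%R).
  { split.
    - assert (1 / (2 * INR N ^ m) <= 1 / 2)%R; [|lra].
      unfold Rdiv. rewrite !Rmult_1_l. apply Rinv_le_contravar; lra.
    - assert (0 < 1 / (2 * INR N ^ m))%R by (apply Rdiv_lt_0_compat; lra). lra. }
  destruct (contraction_small cell_density m _ Hlam) with (eps := (eps / 2)%R) as [a Ha].
  - intros a. unfold cell_density. apply Rmult_le_pos; [apply pos_INR|left; apply Rinv_0_lt_compat, powN_pos].
  - intros a. apply density_drop_factor, Hd.
  - lra.
  - destruct (cover_by_cells a) as [lft [rgt [H1 [H2 H3]]]]. exists lft, rgt.
    split; [exact H1|]. split; [exact H2|]. intros n. eapply Rle_trans; [apply H3|].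
    unfold cell_density in Ha. unfold Rdiv in *. lra.
Qed.

Section Pigeonhole.
Variables a m : nat.

(* Addresses of the level-(2a+m) cells (cell_refine with k = a + m): an a-cell g
   followed by an (a+m)-digit word t, with value g + N^a w(t). *)
Definition addresses : list (Z * list Z) := list_prod (cells a) (words (a + m)).

Definition address_value (gt : Z * list Z) : Z := (fst gt + Npow a * word_value (snd gt))%Z.

Definition has_address (p : Z) (gt : Z * list Z) : Prop :=
  In gt addresses /\ address_value gt = p.

Definition uniquely_addressed (p : Z) : Prop :=
  cell (a + (a + m)) p /\ forall gt gt', has_address p gt -> has_address p gt' -> gt = gt'.

Definition good_block (n r : Z) : Prop :=
  forall u, (0 <= u < Npow m)%Z -> uniquely_addressed (n * Npow (a + m) + Npow a * u + r)%Z.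

Lemma address_exists p : cell (a + (a + m)) p -> exists gt, has_address p gt.
Proof.
  intros Hp. apply cell_refine in Hp as [g [t [Hg [Ht ->]]]]. exists (g, t).
  split; [|reflexivity]. apply in_prod_iff. split; [now apply in_cells|exact Ht].
Qed.

(* The region n N^(a+m) + [0, N^(a+m)) over the a-cells n; it contains every
   level-(2a+m) cell and has exactly as many points as there are addresses. *)
Definition region : list Z :=
  map (fun nq => (fst nq * Npow (a + m) + snd nq)%Z)
      (list_prod (cells a) (zrange 0 (N ^ (a + m)))).

Lemma in_region p : In p region <->
  exists n q, cell a n /\ (0 <= q < Npow (a + m))%Z /\ p = (n * Npow (a + m) + q)%Z.
Proof.
  unfold region. rewrite in_map_iff. split.
  - intros [[n q] [<- Hin]]. apply in_prod_iff in Hin as [Hn Hq]. apply in_zrange in Hq.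
    exists n, q. split; [now apply in_cells|]. unfold Npow. simpl. split; [lia|reflexivity].
  - intros [n [q [Hn [Hq ->]]]]. exists (n, q). split; [reflexivity|]. apply in_prod_iff.
    split; [now apply in_cells|]. apply in_zrange. unfold Npow in Hq. lia.
Qed.

Lemma region_NoDup : NoDup region.
Proof.
  assert (HQ := Npow_pos (a + m)).
  apply NoDup_map_NoDup_ForallPairs; [|apply NoDup_prod; [apply cells_NoDup|apply zrange_NoDup]].
  intros [n q] [n' q'] Hi Hi' Heq. simpl in Heq.
  apply in_prod_iff in Hi as [_ Hq]. apply in_prod_iff in Hi' as [_ Hq'].
  apply in_zrange in Hq. apply in_zrange in Hq'. unfold Npow in *.
  assert (n = n') as <-.
  { rewrite (Z.div_unique (n * Npow (a + m) + q) (Npow (a + m)) n q),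
            (Z.div_unique (n' * Npow (a + m) + q') (Npow (a + m)) n' q'); unfold Npow;
      [now rewrite Heq|lia|ring|lia|ring]. }
  f_equal. lia.
Qed.

Lemma region_length : length region = (cell_count a * N ^ (a + m))%nat.
Proof. unfold region. now rewrite length_map, length_prod, zrange_length. Qed.

Lemma cells_in_region p : cell (a + (a + m)) p -> In p region.
Proof.
  intros Hp. assert (HQ := Npow_pos (a + m)). apply in_region.
  exists (p / Npow (a + m))%Z, (p mod Npow (a + m))%Z.
  split; [now apply cell_coarsen|].
  split; [apply Z.mod_pos_bound; lia|]. rewrite Z.mul_comm. apply Z.div_mod. lia.
Qed.

Definition missing : list Z := filter (fun p => decb (~ cell (a + (a + m)) p)) region.

Definition collisions : list Z :=
  filter (fun p => decb (exists gt gt', has_address p gt /\ has_address p gt' /\ gt <> gt'))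
         (cells (a + (a + m))).

Definition bad : list Z := filter (fun p => decb (~ uniquely_addressed p)) region.

(* Missing points and cells are disjoint parts of the region. *)
Lemma missing_count :
  (length missing + cell_count (a + (a + m)) <= cell_count a * N ^ (a + m))%nat.
Proof.
  rewrite <- region_length. unfold cell_count. rewrite <- length_app. apply NoDup_incl_length.
  - apply NoDup_app; [apply NoDup_filter, region_NoDup|apply cells_NoDup|].
    intros p Hp1 Hp2. apply in_filter_decb in Hp1 as [_ Hp1]. now apply Hp1, in_cells.
  - intros p Hp. apply in_app_or in Hp as [Hp|Hp].
    + now apply in_filter_decb in Hp as [Hp _].
    + now apply cells_in_region, in_cells.
Qed.

(* Every cell has an address and every collision two of them (fibre_count). *)
Lemma collision_count :
  (cell_count (a + (a + m)) + length collisions <= cell_count a * N ^ (a + m))%nat.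
Proof.
  replace (cell_count a * N ^ (a + m))%nat with (length addresses)
    by (unfold addresses; now rewrite length_prod, words_length).
  apply (fibre_count (0%Z, []) address_value).
  - apply cells_NoDup.
  - apply NoDup_filter, cells_NoDup.
  - intros p Hp. now apply in_filter_decb in Hp as [Hp _].
  - intros p Hp. apply in_cells, address_exists in Hp as [gt [Hgt Hv]]. eauto.
  - intros p Hp. apply in_filter_decb in Hp as [_ [gt [gt' [[H1 E1] [[H2 E2] Hne]]]]].
    exists gt, gt'. auto.
Qed.

(* A point of the region that is not uniquely addressed is missing or a collision. *)
Lemma bad_count : (length bad <= length missing + length collisions)%nat.
Proof.
  rewrite <- length_app. apply NoDup_incl_length; [apply NoDup_filter, region_NoDup|].
  intros p Hp. apply in_filter_decb in Hp as [Hp Hbad]. apply in_or_app.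
  destruct (classic (cell (a + (a + m)) p)) as [Hc|Hc].
  - right. apply in_filter_decb. split; [now apply in_cells|].
    apply NNPP. intros Hno. apply Hbad. split; [exact Hc|].
    intros gt gt' H1 H2. apply NNPP. intros Hne. apply Hno. eauto.
  - left. now apply in_filter_decb.
Qed.

(* If no block is good, each pair (n, r) of an a-cell and a residue mod N^a owns a
   distinct bad point n N^(a+m) + N^a u + r. *)
Lemma bad_count_lower :
  (forall n r, cell a n -> (0 <= r < Npow a)%Z -> ~ good_block n r) ->
  (cell_count a * N ^ a <= length bad)%nat.
Proof.
  intros Hno. assert (HQ := Npow_add a m). assert (HA := Npow_pos a).
  assert (HR := Npow_pos m).
  set (pairs := list_prod (cells a) (zrange 0 (N ^ a))).
  replace (cell_count a * N ^ a)%nat with (length pairs)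
    by (unfold pairs; now rewrite length_prod, zrange_length).
  rewrite <- (length_map (fun p => (p / Npow (a + m), p mod Npow a)%Z) bad).
  apply NoDup_incl_length; [apply NoDup_prod; [apply cells_NoDup|apply zrange_NoDup]|].
  intros [n r] Hnr. apply in_prod_iff in Hnr as [Hn Hr].
  apply in_zrange in Hr. apply in_cells in Hn. fold (Npow a) in Hr.
  destruct (not_all_ex_not _ _ (Hno n r Hn ltac:(lia))) as [u Hu].
  apply imply_to_and in Hu as [Hu Hbad].
  apply in_map_iff. exists (n * Npow (a + m) + Npow a * u + r)%Z. split.
  - f_equal.
    + symmetry. apply Z.div_unique with (Npow a * u + r)%Z; [left; rewrite HQ; nia|ring].
    + symmetry. apply Z.mod_unique with (n * Npow m + u)%Z; [left; lia|rewrite HQ; ring].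
  - apply in_filter_decb. split; [|exact Hbad]. apply in_region.
    exists n, (Npow a * u + r)%Z. split; [exact Hn|]. split; [rewrite HQ; nia|ring].
Qed.

Lemma good_block_exists : ~ density_drops m a ->
  exists n r, (0 <= r < Npow a)%Z /\ good_block n r.
Proof.
  intros Hdrop. apply NNPP. intros Hno. apply Hdrop. unfold density_drops.
  assert (Hlow : (cell_count a * N ^ a <= length bad)%nat).
  { apply bad_count_lower. intros n r _ Hr Hgood. apply Hno. eauto. }
  pose proof missing_count. pose proof collision_count. pose proof bad_count.
  rewrite Nat.pow_add_r in *. nia.
Qed.

End Pigeonhole.

(* A good block tiles the window [-M, M] when 2M < N^(k+1): for z in the window the
   point n N^(a+k+1) + N^a (z + M) + r has a unique address (g, d :: t), and z = d + e
   where e is determined by g + N^(a+1) w(t) = N^a (e + n N^(k+1) + M) + r. *)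
Lemma window_from_good_block a k (M : nat) n r :
  (2 * M < N ^ S k)%nat -> (0 <= r < Npow a)%Z -> good_block a (S k) n r ->
  window_tiling D (Z.of_nat M) (fun e => exists t g, In t (words (a + k)) /\ cell a g /\
    (g + Z.of_nat N * Npow a * word_value t = Npow a * (e + n * Npow (S k) + Z.of_nat M) + r)%Z).
Proof.
  intros HM Hr Hgood z Hz.
  assert (Hu : (0 <= z + Z.of_nat M < Npow (S k))%Z) by (unfold Npow; lia).
  destruct (Hgood _ Hu) as [Hcell Huniq].
  replace (n * Npow (a + S k) + Npow a * (z + Z.of_nat M) + r)%Z
    with (Npow a * (z + n * Npow (S k) + Z.of_nat M) + r)%Z in Hcell, Huniq
    by (rewrite Npow_add; ring).
  assert (Hwords : forall d t, In (d :: t) (words (a + S k)) <-> In d D /\ In t (words (a + k))).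
  { intros d t. rewrite Nat.add_succ_r, in_words_S. split.
    - intros [d' [t' [E [Hd Ht]]]]. injection E as -> ->. auto.
    - intros [Hd Ht]. eauto. }
  split.
  - apply cell_refine in Hcell as [g [t [Hg [Ht Hp]]]].
    rewrite Nat.add_succ_r in Ht. apply in_words_S in Ht as [d [t' [-> [Hd Ht']]]].
    exists d, (z - d)%Z. split; [exact Hd|]. split; [|ring].
    exists t', g. split; [exact Ht'|]. split; [exact Hg|]. simpl in Hp. lia.
  - intros d e d' e' Hd [t [g [Ht [Hg He]]]] Hz1 Hd' [t' [g' [Ht' [Hg' He']]]] Hz2.
    assert (Haddr : forall d0 e0 t0 g0, In d0 D -> In t0 (words (a + k)) -> cell a g0 ->
              z = (d0 + e0)%Z ->
              (g0 + Z.of_nat N * Npow a * word_value t0 =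
                 Npow a * (e0 + n * Npow (S k) + Z.of_nat M) + r)%Z ->
              has_address a (S k) (Npow a * (z + n * Npow (S k) + Z.of_nat M) + r)%Z (g0, d0 :: t0)).
    { intros d0 e0 t0 g0 Hd0 Ht0 Hg0 Hz0 He0. split.
      - apply in_prod_iff. split; [now apply in_cells|]. now apply Hwords.
      - unfold address_value. simpl. subst z. lia. }
    assert (E := Huniq _ _ (Haddr d e t g Hd Ht Hg Hz1 He) (Haddr d' e' t' g' Hd' Ht' Hg' Hz2 He')).
    now injection E.
Qed.

End SelfSimilar.

Lemma pow_gt_id N n : (2 <= N)%nat -> (n < N ^ n)%nat.
Proof. intros HN. induction n; simpl; [lia|]. nia. Qed.

Lemma integer_bounds (X : R -> Prop) : bounded X ->
  exists lo hi : Z, forall x, X x -> (IZR lo <= x <= IZR hi)%R.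
Proof.
  intros [l [h Hlh]]. exists (- up (- l))%Z, (up h). intros x Hx.
  destruct (Hlh x Hx). destruct (archimed (- l)). destruct (archimed h).
  rewrite opp_IZR. lra.
Qed.

(* Proposition 4.3.  A tiling of every window [-M, M] exists: otherwise, with
   m = 2M + 1, the density drops at every level (good_block_exists and
   window_from_good_block), so X would be null.  Compactness then tiles Z. *)
Theorem proposition4p3 (N : nat) (D : list Z) (X : R -> Prop) :
  (2 <= N)%nat ->
  NoDup D -> length D = N ->
  is_attractor N D X ->
  positive_measure X ->
  exists E : Z -> Prop, direct_sum_Z D E.
Proof.
  intros HN _ HlenD [_ [Hcompact Hinv]] Hpos.
  destruct (integer_bounds X (compact_P1 X Hcompact)) as [lo [hi Hbetween]].
  apply tiling_from_windows. intros M.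
  set (K := Z.to_nat M).
  assert (Hdrop : exists a, ~ density_drops N X lo hi (S (2 * K)) a).
  { apply not_all_ex_not. intros Hall. apply Hpos.
    exact (null_if_density_drops N D X HN HlenD lo hi Hbetween _ Hall). }
  destruct Hdrop as [a Ha].
  destruct (good_block_exists N D X HN HlenD Hinv lo hi Hbetween a _ Ha) as [n [r [Hr Hgood]]].
  eexists. apply (window_tiling_shrink D (Z.of_nat K)); [lia|].
  apply (window_from_good_block N D X HN HlenD Hinv lo hi Hbetween a (2 * K) K n r);
    [pose proof (pow_gt_id N (S (2 * K)) HN); lia|exact Hr|exact Hgood].
Qed.
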